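(* Let $f:K\to M$ and $g:L\to M$ be group homomorphisms with $f(K)\subseteq g(L)$, let $K\times_ML=\{(k,l)\in K\times L: f(k)=g(l)\}$, $B=\mathrm{Ker}(g)$, and $\iota:B\to K\times_ML$, $\iota(l)=(1_K,l)$. Let $\mathrm{Hom}^f_g(K,L)$ be the set of group homomorphisms $h:K\to L$ with $g\circ h=f$; $B$ acts on it by $h\mapsto l_0hl_0^{-1}$ ($k\mapsto l_0h(k)l_0^{-1}$), and let $\overline{\mathrm{Hom}}^f_g(K,L)$ denote the quotient. For $h\in\mathrm{Hom}^f_g(K,L)$ define $q_h:K\times_ML\to B$ by $q_h(k,l)=l\,h(k)^{-1}$. Then $h\mapsto q_h$ is a bijection from $\mathrm{Hom}^f_g(K,L)$ onto $\mathcal Z^1(\mathsf T^l_\iota,(B,m_B))$, and it induces a bijection $\overline{\mathrm{Hom}}^f_g(K,L)\to\mathsf{Desc}^1(\mathsf T^l_\iota,(B,m_B))$.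
   Context: For an injective group homomorphism $\iota:B\to A$, $\mathcal Z^1(\mathsf T^l_\iota,(B,m_B))$ is identified with the set of maps $q:A\to B$ satisfying (ZL1) $q(1_A)=1_B$; (ZL2) $q(\iota(b)a)=b\,q(a)$ for all $a\in A,b\in B$; (ZL3) $q(aa')=q(a\,\iota(q(a')))$ for all $a,a'\in A$ (the algebra structures on the left $B$-set $B$ for the monad $A\otimes_B-$ on left $B$-sets induced by $\iota$). $\mathsf{Desc}^1(\mathsf T^l_\iota,(B,m_B))$ is its quotient by the relation $q\sim q'$ iff there is $b_0\in B$ with $q(a)b_0=q'(a\,\iota(b_0))$ for all $a\in A$. *)

From Stdlib Require Import ProofIrrelevance.

Set Implicit Arguments.

Record grp := Grp {
  gcar :> Type;
  gmul : gcar -> gcar -> gcar;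
  gone : gcar;
  ginv : gcar -> gcar;
  gmulA : forall x y z, gmul x (gmul y z) = gmul (gmul x y) z;
  gmul1l : forall x, gmul gone x = x;
  gmul1r : forall x, gmul x gone = x;
  gmulVl : forall x, gmul (ginv x) x = gone;
  gmulVr : forall x, gmul x (ginv x) = gone }.

Arguments gmul {g}. Arguments gone {g}. Arguments ginv {g}.
Arguments gmulA {g}. Arguments gmul1l {g}. Arguments gmul1r {g}. Arguments gmulVl {g}. Arguments gmulVr {g}.
Notation "x * y" := (@gmul _ x y).
Notation "x ^-1" := (@ginv _ x) (at level 3, left associativity, format "x ^-1").
Notation "1" := (@gone _).

Definition is_hom (G H : grp) (f : G -> H) : Prop :=
  forall x y, f (x * y) = f x * f y.
Arguments is_hom {G H}.

Lemma hom1 (G H : grp) (f : G -> H) : is_hom f -> f 1 = 1.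
Proof.
  intros Hf. assert (E : f 1 * f 1 = f 1 * 1) by (rewrite <- Hf, gmul1l, gmul1r; reflexivity).
  assert (E2 := f_equal (fun z => (f 1)^-1 * z) E). simpl in E2.
  rewrite !gmulA, gmulVl, !gmul1l in E2. exact E2.
Qed.

Lemma homV (G H : grp) (f : G -> H) : is_hom f -> forall x, f x^-1 = (f x)^-1.
Proof.
  intros Hf x. assert (E : f x^-1 * f x = (f x)^-1 * f x)
    by (rewrite <- Hf, !gmulVl; apply hom1; exact Hf).
  assert (E2 := f_equal (fun z => z * (f x)^-1) E). simpl in E2.
  rewrite <- !gmulA, gmulVr, !gmul1r in E2. exact E2.
Qed.

Section FibreProduct.
Variables (K L M : grp) (f : K -> M) (g : L -> M).
Hypotheses (Hf : is_hom f) (Hg : is_hom g).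

Definition fp_car := { p : K * L | f (fst p) = g (snd p) }.

Definition fp_mul (x y : fp_car) : fp_car.
Proof.
  refine (exist _ (fst (proj1_sig x) * fst (proj1_sig y),
                   snd (proj1_sig x) * snd (proj1_sig y)) _).
  destruct x as [[a b] ex], y as [[c d] ey]; simpl in *.
  rewrite Hf, Hg, ex, ey; reflexivity.
Defined.

Definition fp_one : fp_car.
Proof. refine (exist _ (1, 1) _). simpl; rewrite (hom1 Hf), (hom1 Hg); reflexivity. Defined.

Definition fp_inv (x : fp_car) : fp_car.
Proof.
  refine (exist _ ((fst (proj1_sig x))^-1, (snd (proj1_sig x))^-1) _).
  destruct x as [[a b] ex]; simpl in *. rewrite (homV Hf), (homV Hg), ex; reflexivity.
Defined.

Lemma fp_eq (x y : fp_car) : proj1_sig x = proj1_sig y -> x = y.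
Proof. destruct x, y; simpl; intros ->; f_equal; apply proof_irrelevance. Qed.

Definition FP : grp.
Proof.
  refine (@Grp fp_car fp_mul fp_one fp_inv _ _ _ _ _);
  intros; apply fp_eq; simpl;
  repeat match goal with x : fp_car |- _ => destruct x as [[? ?] ?] end; simpl;
  rewrite ?gmulA, ?gmul1l, ?gmul1r, ?gmulVl, ?gmulVr; reflexivity.
Defined.

Definition ker_car := { l : L | g l = 1 }.

Definition ker_mul (x y : ker_car) : ker_car.
Proof.
  refine (exist _ (proj1_sig x * proj1_sig y) _).
  destruct x as [a ea], y as [b eb]; simpl. rewrite Hg, ea, eb, gmul1l; reflexivity.
Defined.

Definition ker_one : ker_car := exist _ 1 (hom1 Hg).

Definition ker_inv (x : ker_car) : ker_car.
Proof.
  refine (exist _ (proj1_sig x)^-1 _).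
  destruct x as [a ea]; simpl. rewrite (homV Hg), ea.
  rewrite <- (gmul1l (1^-1)). apply gmulVr.
Defined.

Lemma ker_eq (x y : ker_car) : proj1_sig x = proj1_sig y -> x = y.
Proof. destruct x, y; simpl; intros ->; f_equal; apply proof_irrelevance. Qed.

Definition Ker : grp.
Proof.
  refine (@Grp ker_car ker_mul ker_one ker_inv _ _ _ _ _);
  intros; apply ker_eq; simpl;
  repeat match goal with x : ker_car |- _ => destruct x as [? ?] end; simpl;
  rewrite ?gmulA, ?gmul1l, ?gmul1r, ?gmulVl, ?gmulVr; reflexivity.
Defined.

Definition iota (b : Ker) : FP.
Proof.
  refine (exist _ (1, proj1_sig (b : ker_car)) _).
  destruct b as [l el]; simpl. rewrite el; apply (hom1 Hf).
Defined.

Definition HomFG (h : K -> L) : Prop := is_hom h /\ forall k, g (h k) = f k.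

(* the B-action relation on Hom^f_g(K,L): h' = l0 h l0^-1 for some l0 in B *)
Definition hom_conj_rel (h h' : K -> L) : Prop :=
  exists l0 : Ker, forall k, h' k = proj1_sig (l0 : ker_car) * h k * (proj1_sig (l0 : ker_car))^-1.

Definition qh (h : K -> L) (Hh : forall k, g (h k) = f k) (a : FP) : Ker.
Proof.
  refine (exist _ (snd (proj1_sig (a : fp_car)) * (h (fst (proj1_sig (a : fp_car))))^-1) _).
  destruct a as [[k l] e]; simpl in *.
  rewrite Hg, (homV Hg), Hh, <- e. apply gmulVr.
Defined.

End FibreProduct.

(* Z^1(T^l_iota,(B,m_B)) for iota : B -> A: maps q : A -> B with (ZL1)-(ZL3) *)
Definition Z1 (B A : grp) (io : B -> A) (q : A -> B) : Prop :=
  q 1 = 1 /\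
  (forall (a : A) (b : B), q (io b * a) = b * q a) /\
  (forall a a' : A, q (a * a') = q (a * io (q a'))).

(* the relation defining Desc^1 as a quotient of Z^1 *)
Definition desc_rel (B A : grp) (io : B -> A) (q q' : A -> B) : Prop :=
  exists b0 : B, forall a : A, q a * b0 = q' (a * io b0).

From Stdlib Require Import ClassicalEpsilon.

Set Implicit Arguments.

(* A homomorphism h over M is recovered from q_h by evaluating it at points (k, s k) of the
   fibre product, s being any set-theoretic section of g over f (it exists since f(K) ⊆ g(L)):
   q_h (k, s k) = s k h(k)^-1.  Conversely, (ZL2) says a cocycle q is determined by these
   values, because (k, l) = ι(l (s k)^-1) (k, s k), and (ZL3) at two such points is exactly
   multiplicativity of k ↦ q(k, s k)^-1 s k.  Conjugating h by l0 ∈ B corresponds to the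
   descent relation with b0 = l0^-1. *)

Section GroupFacts.
Context {G : grp}.

Lemma mulgI (x y z : G) : x * y = x * z -> y = z.
Proof. intros E. rewrite <- (gmul1l y), <- (gmul1l z), <- (gmulVl x), <- !gmulA, E. reflexivity. Qed.

Lemma mulIg (x y z : G) : y * x = z * x -> y = z.
Proof. intros E. rewrite <- (gmul1r y), <- (gmul1r z), <- (gmulVr x), !gmulA, E. reflexivity. Qed.

Lemma invgM (x y : G) : (x * y)^-1 = y^-1 * x^-1.
Proof. apply (mulgI (x * y)). rewrite gmulVr, <- gmulA, (gmulA y), gmulVr, gmul1l, gmulVr. reflexivity. Qed.

Lemma invgK (x : G) : x^-1^-1 = x.
Proof. apply (mulgI x^-1). rewrite gmulVr, gmulVl. reflexivity. Qed.

Lemma invg1 : (1 : G)^-1 = 1.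
Proof. rewrite <- (gmul1l (1^-1)). apply gmulVr. Qed.

End GroupFacts.

Section CocycleCorrespondence.
Variables (K L M : grp) (f : K -> M) (g : L -> M).
Hypotheses (Hf : is_hom f) (Hg : is_hom g).
Hypothesis Himg : forall k : K, exists l : L, g l = f k.

Notation A := (FP Hf Hg).
Notation B := (Ker Hg).
Notation io := (@iota K L M f g Hf Hg).
Notation q_ := (@qh K L M f g Hf Hg).

Definition fp_section (k : K) : L :=
  proj1_sig (constructive_indefinite_description _ (Himg k)).

Lemma fp_sectionP (k : K) : f k = g (fp_section k).
Proof. symmetry. exact (proj2_sig (constructive_indefinite_description _ (Himg k))). Qed.

Definition fp_lift (k : K) : A := exist _ (k, fp_section k) (fp_sectionP k).

Lemma qh_Z1 (h : K -> L) (Hh : HomFG K L M f g h) : @Z1 B A io (q_ h (proj2 Hh)).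
Proof.
  destruct Hh as [Hhom Hgh]; split; [|split].
  - apply ker_eq. simpl. rewrite (hom1 Hhom), invg1, gmul1l. reflexivity.
  - intros [[k l] e] [b eb]. apply ker_eq. simpl. rewrite gmul1l, gmulA. reflexivity.
  - intros [[k l] e] [[k' l'] e']. apply ker_eq. simpl.
    rewrite gmul1r, Hhom, invgM, !gmulA. reflexivity.
Qed.

Lemma qh_lift (h : K -> L) (Hgh : forall k, g (h k) = f k) (k : K) :
  proj1_sig (q_ h Hgh (fp_lift k) : ker_car L M g) = fp_section k * (h k)^-1.
Proof. reflexivity. Qed.

Lemma qh_inj (h h' : K -> L) (Hgh : forall k, g (h k) = f k) (Hgh' : forall k, g (h' k) = f k) :
  (forall a : A, q_ h Hgh a = q_ h' Hgh' a) -> forall k, h k = h' k.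
Proof.
  intros E k.
  assert (Ek := f_equal (@proj1_sig _ _) (E (fp_lift k))). rewrite !qh_lift in Ek.
  apply mulgI in Ek. rewrite <- (invgK (h k)), Ek, invgK. reflexivity.
Qed.

Section FromCocycle.
Variable q : A -> B.
Hypothesis q_left : forall (a : A) (b : B), q (io b * a) = b * q a.
Hypothesis q_mul : forall a a' : A, q (a * a') = q (a * io (q a')).

Definition hom_of_cocycle (k : K) : L :=
  (proj1_sig (q (fp_lift k) : ker_car L M g))^-1 * fp_section k.

Lemma hom_of_cocycle_over (k : K) : g (hom_of_cocycle k) = f k.
Proof.
  unfold hom_of_cocycle. rewrite Hg, (homV Hg), (proj2_sig (q (fp_lift k))), <- fp_sectionP.
  rewrite invg1, gmul1l. reflexivity.
Qed.

Lemma cocycle_val (a : A) :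
  proj1_sig (q a : ker_car L M g) = snd (proj1_sig a) * (hom_of_cocycle (fst (proj1_sig a)))^-1.
Proof.
  destruct a as [[k l] e]; simpl.
  assert (eb : g (l * (fp_section k)^-1) = 1).
  { simpl in e. rewrite Hg, (homV Hg), <- fp_sectionP, e. apply gmulVr. }
  assert (Ea : io (exist _ _ eb) * fp_lift k = exist _ (k, l) e).
  { apply fp_eq. simpl. rewrite gmul1l, <- gmulA, gmulVl, gmul1r. reflexivity. }
  rewrite <- Ea, q_left. simpl. unfold hom_of_cocycle. rewrite invgM, invgK, gmulA. reflexivity.
Qed.

Lemma hom_of_cocycle_hom : is_hom hom_of_cocycle.
Proof.
  intros k k'.
  assert (E := f_equal (@proj1_sig _ _) (q_mul (fp_lift k) (fp_lift k'))).
  rewrite !cocycle_val in E. simpl in E. rewrite cocycle_val in E. simpl in E.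
  rewrite gmul1r, <- !gmulA in E. apply mulgI, mulgI in E.
  rewrite <- (invgK (hom_of_cocycle (k * k'))), E, invgM, !invgK. reflexivity.
Qed.

End FromCocycle.

Lemma Z1_qh (q : A -> B) : @Z1 B A io q ->
  exists (h : K -> L) (Hh : HomFG K L M f g h), forall a, q a = q_ h (proj2 Hh) a.
Proof.
  intros [_ [q_left q_mul]].
  exists (hom_of_cocycle q), (conj (hom_of_cocycle_hom q q_left q_mul) (hom_of_cocycle_over q)).
  intros a. apply ker_eq. rewrite (cocycle_val q q_left). reflexivity.
Qed.

Lemma hom_conj_desc (h h' : K -> L) (Hgh : forall k, g (h k) = f k)
    (Hgh' : forall k, g (h' k) = f k) :
  hom_conj_rel K Hg h h' -> @desc_rel B A io (q_ h Hgh) (q_ h' Hgh').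
Proof.
  intros [l0 E]. exists (ker_inv Hg l0). intros [[k l] e]. apply ker_eq. simpl.
  rewrite gmul1r, E, !invgM, invgK, !gmulA, <- (gmulA l (proj1_sig l0)^-1), gmulVl, gmul1r.
  reflexivity.
Qed.

Lemma desc_hom_conj (h h' : K -> L) (Hgh : forall k, g (h k) = f k)
    (Hgh' : forall k, g (h' k) = f k) :
  @desc_rel B A io (q_ h Hgh) (q_ h' Hgh') -> hom_conj_rel K Hg h h'.
Proof.
  intros [b0 E]. exists (ker_inv Hg b0). intros k. simpl.
  assert (Ek := f_equal (@proj1_sig _ _) (E (fp_lift k))). simpl in Ek.
  rewrite gmul1r, <- !gmulA in Ek. apply mulgI in Ek.
  rewrite invgK. apply (mulIg (proj1_sig b0)^-1).
  rewrite <- (gmulA _ (proj1_sig b0)), gmulVr, gmul1r.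
  apply (f_equal ginv) in Ek. rewrite !invgM, !invgK in Ek. symmetry. exact Ek.
Qed.

End CocycleCorrespondence.

Theorem mainTheorem19 (K L M : grp) (f : K -> M) (g : L -> M)
  (Hf : is_hom f) (Hg : is_hom g)
  (Himg : forall k : K, exists l : L, g l = f k) :
  let B : grp := Ker Hg in
  let A : grp := FP Hf Hg in
  let io : B -> A := @iota K L M f g Hf Hg in
  let q_ (h : K -> L) (Hh : HomFG K L M f g h) : A -> B := @qh K L M f g Hf Hg h (proj2 Hh) in
  (forall (h : K -> L) (Hh : HomFG K L M f g h), @Z1 B A io (q_ h Hh)) /\
  (forall (h h' : K -> L) (Hh : HomFG K L M f g h) (Hh' : HomFG K L M f g h'),
      (forall a : A, q_ h Hh a = q_ h' Hh' a) -> forall k : K, h k = h' k) /\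
  (forall q : A -> B, @Z1 B A io q ->
      exists (h : K -> L) (Hh : HomFG K L M f g h), forall a : A, q a = q_ h Hh a) /\
  (forall (h h' : K -> L) (Hh : HomFG K L M f g h) (Hh' : HomFG K L M f g h'),
      hom_conj_rel K Hg h h' <-> @desc_rel B A io (q_ h Hh) (q_ h' Hh')).
Proof.
  intros B A io q_. split; [|split; [|split]].
  - exact (qh_Z1 Hf Hg).
  - intros h h' Hh Hh'. apply (qh_inj Himg).
  - exact (Z1_qh Himg).
  - intros h h' Hh Hh'. split; [apply hom_conj_desc | apply (desc_hom_conj Himg)].
Qed.
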